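(* Consider the scalar system $\dot x(t)=\Big(\frac{1}{1+t+x(t)^2}-t|\cos t|\Big)x(t)$, $t\in[0,\infty)$. Every solution satisfies $$|x(t)|\le\exp\Big(\ln\big(1+\tfrac{3\pi}{2}\big)+1\Big)\exp\Big(-\frac{2}{3\pi}(t-t_0)\Big)|x(t_0)|,\qquad\forall t\ge t_0\ge0;$$ in particular the system is globally uniformly exponentially stable.
   Context: Globally uniformly exponentially stable: there exist constants $\theta>0$, $\alpha>0$ with $|x(t)|\le\theta|x(t_0)|e^{-\alpha(t-t_0)}$ for all $t\ge t_0$ and all solutions. *)

From Stdlib Require Import Reals.
Open Scope R_scope.

Definition rhs (t y : R) : R := (/ (1 + t + y ^ 2) - t * Rabs (cos t)) * y.

Definition is_solution (f : R -> R -> R) (x : R -> R) (t0 : R) : Prop :=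
  (forall t, t0 <= t -> limit1_in x (fun s => t0 <= s) (x t) t) /\
  (forall t, t0 < t -> derivable_pt_lim x t (f t (x t))).

Definition GUES (f : R -> R -> R) : Prop :=
  exists theta alpha : R, 0 < theta /\ 0 < alpha /\
    forall (x : R -> R) (t0 : R), 0 <= t0 -> is_solution f x t0 ->
      forall t, t0 <= t -> Rabs (x t) <= theta * Rabs (x t0) * exp (- alpha * (t - t0)).

(* Along a solution, the Lyapunov-type quantity  x(t)^2 exp(-2 G(t))  is nonincreasing
   whenever  G' = 1/(1+t) - t cos^2 t  dominates the instantaneous rate
   1/(1+t+x^2) - t|cos t|  (because  cos^2 <= |cos| ), so  |x(t)| <= |x(t0)| exp(G(t) - G(t0)).
   An explicit primitive of  t cos^2 t  shows that  G(t) - G(t0)  is bounded by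
   1/4 + 5/4 (t-t0) - (t-t0)^2/4 : the quadratic term eventually wins, which gives the
   exponential bound with rate  2/(3 pi)  and overshoot  exp(ln(1 + 3pi/2) + 1). *)

From Stdlib Require Import Reals Lra Psatz.
From Coquelicot Require Import Coquelicot.
Open Scope R_scope.

Lemma continuity_pt_limit1_in (f : R -> R) (D : R -> Prop) (x0 : R) :
  continuity_pt f x0 -> limit1_in f D (f x0) x0.
Proof.
  intros Hf eps Heps.
  destruct (Hf eps Heps) as [a [Ha Hclose]].
  exists a; split; [exact Ha|].
  intros y [_ Hy]; destruct (Req_dec y x0) as [->|Hne].
  - rewrite Rdist_eq; exact Heps.
  - apply Hclose; repeat split; auto.
Qed.

Lemma limit1_in_right_ge (h : R -> R) (t0 t K : R) :
  t0 < t -> limit1_in h (fun s => t0 <= s) (h t0) t0 ->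
  (forall s, t0 < s <= t -> K <= h s) -> K <= h t0.
Proof.
  intros Ht Hlim Hbound.
  destruct (Rle_lt_dec K (h t0)) as [|Hlt]; [assumption|].
  destruct (Hlim (K - h t0) ltac:(lra)) as [a [Ha Hclose]].
  set (d := Rmin a (t - t0)).
  assert (Hd : 0 < d) by (apply Rmin_pos; lra).
  assert (Hda : d <= a) by apply Rmin_l.
  assert (Hdt : d <= t - t0) by apply Rmin_r.
  set (s := t0 + d / 2).
  assert (Hdist : Rabs (h s - h t0) < K - h t0).
  { apply (Hclose s); unfold s; split; [lra|].
    simpl; unfold Rdist; rewrite Rabs_right; lra. }
  specialize (Hbound s ltac:(unfold s; lra)).
  apply Rabs_def2 in Hdist; lra.
Qed.

Lemma ln_sub_le (x y : R) : 1 <= x -> x <= y -> ln y - ln x <= y - x.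
Proof.
  intros Hx Hxy.
  rewrite <- ln_div by lra.
  assert (Hln : 1 + ln (y / x) <= y / x).
  { rewrite <- (exp_ln (y / x)) at 2 by (apply Rdiv_lt_0_compat; lra).
    apply exp_ineq1_le. }
  assert (y / x - 1 <= y - x).
  { apply (Rmult_le_reg_r x); [lra|]. field_simplify; nra. }
  lra.
Qed.

Lemma sin_lipschitz (a b : R) : Rabs (sin b - sin a) <= Rabs (b - a).
Proof.
  destruct (MVT_abs sin cos a b (fun c _ => derivable_pt_lim_sin c)) as [c [-> _]].
  pose proof (Rabs_pos (b - a)).
  assert (Rabs (cos c) <= 1) by (apply Rabs_le, COS_bound).
  nra.
Qed.

Lemma ln_1_plus_3PI_2_ge : 3 / 2 <= ln (1 + 3 * PI / 2).
Proof.
  pose proof PI2_3_2; pose proof exp_le_3; pose proof (exp_pos (1 / 2)).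
  assert (Hsq : exp (1 / 2) * exp (1 / 2) = exp 1)
    by (rewrite <- exp_plus; f_equal; field).
  assert (exp (1 / 2) <= 7 / 4) by nra.
  assert (Hexp : exp (3 / 2) <= 1 + 3 * PI / 2).
  { replace (3 / 2) with (1 + 1 / 2) by field. rewrite exp_plus. nra. }
  rewrite <- (ln_exp (3 / 2)). apply ln_le; [apply exp_pos | exact Hexp].
Qed.

Section Comparison.

Variables (f : R -> R -> R) (g G : R -> R).

Hypothesis G_derive : forall s, 0 <= s -> is_derive G s (g s).
Hypothesis rate_le : forall t y, 0 <= t -> y * f t y <= g t * y ^ 2.

Definition lyapunov (x : R -> R) (u : R) : R := x u ^ 2 * exp (-2 * G u).

Lemma weight_derive (s : R) : 0 <= s ->
  is_derive (fun u => exp (-2 * G u)) s (-2 * g s * exp (-2 * G s)).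
Proof.
  intros Hs.
  evar (d : R); replace (-2 * g s * exp (-2 * G s)) with d; subst d.
  - apply (is_derive_comp exp (fun u => -2 * G u)); [apply is_derive_exp|].
    apply is_derive_scal, G_derive, Hs.
  - unfold scal; simpl; unfold mult; simpl; ring.
Qed.

Lemma lyapunov_derive (x : R -> R) (s : R) : 0 <= s ->
  derivable_pt_lim x s (f s (x s)) ->
  is_derive (lyapunov x) s
    (2 * exp (-2 * G s) * (x s * f s (x s) - g s * x s ^ 2)).
Proof.
  intros Hs Hx; apply is_derive_Reals in Hx.
  evar (d : R); replace (2 * exp (-2 * G s) * _) with d; subst d.
  - apply (is_derive_mult (fun u => x u ^ 2) (fun u => exp (-2 * G u)));
      [apply is_derive_pow, Hx | apply weight_derive, Hs | apply Rmult_comm].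
  - unfold plus, mult; simpl; unfold mult; simpl; ring.
Qed.

Lemma lyapunov_nonincreasing (x : R -> R) (t0 s t : R) :
  0 <= t0 -> is_solution f x t0 -> t0 < s <= t -> lyapunov x t <= lyapunov x s.
Proof.
  intros Ht0 [_ Hx] [Hs Hst].
  destruct (Req_dec s t) as [->|Hne]; [lra|].
  destruct (MVT_cor2 (lyapunov x)
              (fun c => 2 * exp (-2 * G c) * (x c * f c (x c) - g c * x c ^ 2)) s t)
    as [c [Hdiff Hc]]; [lra| |].
  - intros c Hc; apply is_derive_Reals, lyapunov_derive; [lra|apply Hx; lra].
  - assert (Hslope : 2 * exp (-2 * G c) * (x c * f c (x c) - g c * x c ^ 2) <= 0).
    { pose proof (exp_pos (-2 * G c)); pose proof (rate_le c (x c) ltac:(lra)).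
      nra. }
    nra.
Qed.

Lemma lyapunov_right_continuous (x : R -> R) (t0 : R) :
  0 <= t0 -> is_solution f x t0 ->
  limit1_in (lyapunov x) (fun s => t0 <= s) (lyapunov x t0) t0.
Proof.
  intros Ht0 [Hcont _].
  assert (Hweight : limit1_in (fun u => exp (-2 * G u)) (fun s => t0 <= s)
                      (exp (-2 * G t0)) t0).
  { apply (continuity_pt_limit1_in (fun u => exp (-2 * G u))), derivable_continuous_pt.
    exists (-2 * g t0 * exp (-2 * G t0)).
    apply is_derive_Reals; exact (weight_derive t0 Ht0). }
  pose proof (Hcont t0 (Rle_refl t0)) as Hx.
  pose proof (limit_mul _ _ _ _ _ _ (limit_mul _ _ _ _ _ _ Hx Hx) Hweight) as Hlim.
  replace (lyapunov x t0) with (x t0 * x t0 * exp (-2 * G t0))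
    by (unfold lyapunov; ring).
  refine (limit1_ext _ _ _ _ _ _ Hlim); intros u _; unfold lyapunov; ring.
Qed.

Lemma lyapunov_le_initial (x : R -> R) (t0 t : R) :
  0 <= t0 -> is_solution f x t0 -> t0 <= t -> lyapunov x t <= lyapunov x t0.
Proof.
  intros Ht0 Hsol [Ht | <-]; [|lra].
  apply (limit1_in_right_ge (lyapunov x) t0 t); [exact Ht | |].
  - apply lyapunov_right_continuous; assumption.
  - intros s Hs; apply (lyapunov_nonincreasing x t0); assumption.
Qed.

Lemma solution_abs_le (x : R -> R) (t0 t : R) :
  0 <= t0 -> is_solution f x t0 -> t0 <= t ->
  Rabs (x t) <= Rabs (x t0) * exp (G t - G t0).
Proof.
  intros Ht0 Hsol Ht.
  pose proof (lyapunov_le_initial x t0 t Ht0 Hsol Ht) as HV; unfold lyapunov in HV.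
  pose proof (exp_pos (-2 * G t)) as HE; pose proof (exp_pos (G t - G t0)) as HA.
  set (A := exp (G t - G t0)) in *.
  assert (Hweight : exp (-2 * G t0) = exp (-2 * G t) * (A * A))
    by (unfold A; rewrite <- !exp_plus; f_equal; ring).
  rewrite Hweight in HV.
  assert (Hsq : (x t)² <= (x t0 * A)²) by (unfold Rsqr; nra).
  apply Rsqr_le_abs_0 in Hsq.
  rewrite Rabs_mult, (Rabs_pos_eq A) in Hsq by lra; exact Hsq.
Qed.

End Comparison.

Definition t_cos2_primitive (s : R) : R :=
  s ^ 2 / 4 + s * sin (2 * s) / 4 + cos (2 * s) / 8.

Definition growth_exponent (s : R) : R := ln (1 + s) - t_cos2_primitive s.

Lemma growth_exponent_derive (s : R) : 0 <= s ->
  is_derive growth_exponent s (/ (1 + s) - s * cos s ^ 2).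
Proof.
  intros Hs; unfold growth_exponent, t_cos2_primitive.
  auto_derive; [lra|].
  rewrite cos_2a_cos; field; lra.
Qed.

Lemma rhs_rate_le (t y : R) : 0 <= t ->
  y * rhs t y <= (/ (1 + t) - t * cos t ^ 2) * y ^ 2.
Proof.
  intros Ht; unfold rhs.
  assert (Hinv : / (1 + t + y ^ 2) <= / (1 + t))
    by (apply Rinv_le_contravar; [lra | pose proof (pow2_ge_0 y); lra]).
  assert (Hcos : cos t ^ 2 <= Rabs (cos t)).
  { rewrite <- pow2_abs.
    assert (Rabs (cos t) <= 1) by (apply Rabs_le, COS_bound).
    pose proof (Rabs_pos (cos t)); nra. }
  pose proof (pow2_ge_0 y).
  assert (0 <= y ^ 2 * (/ (1 + t) - / (1 + t + y ^ 2)))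
    by (apply Rmult_le_pos; lra).
  assert (0 <= y ^ 2 * (t * (Rabs (cos t) - cos t ^ 2)))
    by (apply Rmult_le_pos; [|apply Rmult_le_pos]; lra).
  nra.
Qed.

Lemma growth_exponent_increment_le (t0 t : R) : 0 <= t0 <= t ->
  growth_exponent t - growth_exponent t0
    <= 1 / 4 + 5 / 4 * (t - t0) - (t - t0) ^ 2 / 4.
Proof.
  intros [Ht0 Ht].
  pose proof (ln_sub_le (1 + t0) (1 + t) ltac:(lra) ltac:(lra)) as Hln.
  pose proof (sin_lipschitz (2 * t0) (2 * t)) as Hsin.
  rewrite (Rabs_pos_eq (2 * t - 2 * t0)) in Hsin by lra.
  apply Rabs_le_between in Hsin.
  pose proof (SIN_bound (2 * t)); pose proof (COS_bound (2 * t)); pose proof (COS_bound (2 * t0)).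
  assert (0 <= (t - t0) * (sin (2 * t) + 1)) by (apply Rmult_le_pos; lra).
  assert (0 <= t0 * (sin (2 * t) - sin (2 * t0) + 2 * (t - t0)))
    by (apply Rmult_le_pos; lra).
  unfold growth_exponent, t_cos2_primitive.
  nra.
Qed.

Lemma growth_exponent_decay (t0 t : R) : 0 <= t0 <= t ->
  growth_exponent t - growth_exponent t0
    <= ln (1 + 3 * PI / 2) + 1 - 2 / (3 * PI) * (t - t0).
Proof.
  intros Ht.
  pose proof (growth_exponent_increment_le t0 t Ht) as Hinc.
  pose proof ln_1_plus_3PI_2_ge; pose proof PI2_3_2.
  assert (Hrate : 2 / (3 * PI) <= 2 / 9)
    by (apply Rmult_le_compat_l; [lra | apply Rinv_le_contravar; lra]).
  assert (2 / (3 * PI) * (t - t0) <= 2 / 9 * (t - t0))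
    by (apply Rmult_le_compat_r; lra).
  (* the quadratic  d^2/4 - 53 d/36 + 9/4  has no real root since  (53/36)^2 < 9/4 *)
  pose proof (pow2_ge_0 ((t - t0) / 2 - 53 / 36)).
  nra.
Qed.

Lemma rhs_solution_bound (x : R -> R) (t0 : R) :
  0 <= t0 -> is_solution rhs x t0 -> forall t, t0 <= t ->
  Rabs (x t) <= exp (ln (1 + 3 * PI / 2) + 1)
                * exp (- (2 / (3 * PI)) * (t - t0)) * Rabs (x t0).
Proof.
  intros Ht0 Hsol t Ht.
  pose proof (solution_abs_le rhs (fun s => / (1 + s) - s * cos s ^ 2)
                growth_exponent growth_exponent_derive rhs_rate_le x t0 t Ht0 Hsol Ht)
    as Hx.
  assert (Hexp : exp (growth_exponent t - growth_exponent t0)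
                 <= exp (ln (1 + 3 * PI / 2) + 1) * exp (- (2 / (3 * PI)) * (t - t0))).
  { rewrite <- exp_plus.
    destruct (Rle_lt_or_eq_dec _ _ (growth_exponent_decay t0 t ltac:(lra)))
      as [Hlt | Heq].
    - left; apply exp_increasing; lra.
    - right; f_equal; lra. }
  pose proof (Rabs_pos (x t0)).
  nra.
Qed.

Theorem mainTheorem10 :
  (forall (x : R -> R) (t0 : R), 0 <= t0 -> is_solution rhs x t0 ->
     forall t, t0 <= t ->
       Rabs (x t) <= exp (ln (1 + 3 * PI / 2) + 1)
                     * exp (- (2 / (3 * PI)) * (t - t0)) * Rabs (x t0))
  /\ GUES rhs.
Proof.
  split; [exact rhs_solution_bound|].
  exists (exp (ln (1 + 3 * PI / 2) + 1)), (2 / (3 * PI)).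
  split; [apply exp_pos|]; split.
  - pose proof PI_RGT_0; apply Rdiv_lt_0_compat; lra.
  - intros x t0 Ht0 Hsol t Ht.
    rewrite Rmult_assoc, (Rmult_comm (Rabs (x t0))), <- Rmult_assoc.
    exact (rhs_solution_bound x t0 Ht0 Hsol t Ht).
Qed.
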